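(* Let $t \ge 0$ and consider the three-taxon multispecies coalescent described in the context, with species tree of topology $AB|C$ and internal branch length $t$, and $L$ independent loci. For $XY\in\{AB,AC,BC\}$ let $N_{XY}$ be the number of loci whose gene-tree topology is $XY|Z$ (where $Z$ is the remaining species). Let $\mathbb{P}_L$ be the probability of the failure event of the $R^*$/STAR/MDC method, namely $N_{AB} < \max\{N_{AC},N_{BC}\}$. Then the limit $\alpha_{R^*}(t)=-\lim_{L\to\infty}\frac1L\ln\mathbb{P}_L$ exists and $$\alpha_{R^*}(t) = -\ln\left(2\sqrt{\tfrac13 e^{-t}\left(1-\tfrac23 e^{-t}\right)} + \tfrac13 e^{-t}\right).$$ Moreover, as $t\to0$, $\alpha_{R^*}(t)=\frac34 t^2+O(t^3)$, and as $t\to+\infty$, $\alpha_{R^*}(t) - \frac{t}{2} \to -\frac12\ln\frac43$.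
   Context: Multispecies coalescent, three-taxon case: ultrametric rooted species tree on species $A,B,C$ with topology $AB|C$, equal population sizes, time in units of $N$ generations. Populations $A,B,C$, ancestral population $AB$ existing between divergence times $\tau_{AB}$ and $\tau_{ABC}$, and root population $ABC$ above $\tau_{ABC}$; $t=\tau_{ABC}-\tau_{AB}$. For each locus one lineage is sampled from each of $A,B,C$; backwards in time, each pair of lineages in the same population coalesces independently at rate $1$. Loci are independent. Thus with probability $1-e^{-t}$ the $A$ and $B$ lineages coalesce in population $AB$ (gene tree topology $AB|C$), and with probability $e^{-t}$ they do not, in which case each of the three topologies $AB|C$, $AC|B$, $BC|A$ occurs with probability $1/3$. Gene trees are known exactly. The $R^*$ consensus, STAR and MDC methods all output the most frequent gene-tree topology in this three-taxon setting. *)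

From mathcomp Require Import all_boot all_order all_algebra.
From mathcomp Require Import all_classical all_reals all_analysis.
Set Implicit Arguments. Unset Strict Implicit. Unset Printing Implicit Defensive.
Import Order.TTheory GRing.Theory Num.Theory.
Local Open Scope ring_scope.

Definition topo := 'I_3.
Definition tAB : topo := @Ordinal 3 0 erefl.
Definition tAC : topo := @Ordinal 3 1 erefl.
Definition tBC : topo := @Ordinal 3 2 erefl.

(* Gene-tree topology distribution at one locus under the three-taxon MSC
   with species tree AB|C and internal branch length t:
   P(AB|C) = (1 - e^{-t}) + e^{-t}/3, P(AC|B) = P(BC|A) = e^{-t}/3. *)
Definition gt_prob (R : realType) (t : R) (g : topo) : R :=
  if g == tAB then (1 - expR (- t)) + expR (- t) / 3 else expR (- t) / 3.

Definition count_topo (L : nat) (G : {ffun 'I_L -> topo}) (x : topo) : nat :=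
  #|[set i | G i == x]|.

Definition rstar_fails (L : nat) (G : {ffun 'I_L -> topo}) : bool :=
  (count_topo G tAB < maxn (count_topo G tAC) (count_topo G tBC))%N.

Definition fail_prob (R : realType) (t : R) (L : nat) : R :=
  \sum_(G : {ffun 'I_L -> topo} | rstar_fails G) \prod_(i < L) gt_prob t (G i).

Definition alpha_rstar (R : realType) (t : R) : R :=
  - ln (2 * Num.sqrt (expR (- t) / 3 * (1 - 2 / 3 * expR (- t))) + expR (- t) / 3).

(* Write [p = 1 - 2/3 e^-t] and [q = e^-t / 3] for the probabilities of the
   matching and of each mismatching gene-tree topology, and
   [rho = 2 sqrt (p q) + q], so that the claimed exponent is [- ln rho].

   Upper bound (Chernoff): failure forces [N_AB <= N_AC] or [N_AB <= N_BC].
   Reweighting by [lam ^ (N_AC - N_AB) >= 1] with [lam = sqrt (p / q)] turns the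
   per-locus law [(p, q, q)] on (AB, AC, BC) into the weights [(s, s, q)],
   [s = sqrt (p q)], of total mass [rho]; hence [P_L <= 2 rho ^ L].

   Lower bound: profiles with [N_AC = N_AB + 1] fail, and their tilted mass is
   the coefficient of [X ^ (L + 1)] in [(s + q X + s X ^ 2) ^ L].  This
   polynomial is palindromic, so by Cauchy-Schwarz its central coefficients
   are at least [rho ^ L / (L + 1)]; thus [P_L >= q ^ 2 rho ^ L / (L + 1)].

   The expansions come from [1 - rho = (sqrt p - sqrt q) ^ 2 = 3/4 t ^ 2 + O(t ^ 3)]
   and from [rho e ^ (t / 2) --> 2 / sqrt 3]. *)

From mathcomp Require Import all_boot all_order all_algebra.
From mathcomp Require Import all_classical all_reals all_analysis.
From mathcomp Require Import zify ring lra.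
Import Order.TTheory GRing.Theory Num.Theory.
Import numFieldNormedType.Exports.
Local Open Scope classical_set_scope.
Local Open Scope ring_scope.
Set Implicit Arguments. Unset Strict Implicit. Unset Printing Implicit Defensive.

Lemma topoP (g : topo) : [\/ g = tAB, g = tAC | g = tBC].
Proof.
case: g => [[|[|[|k]]] lt_k3] //.
- by constructor 1; apply/val_inj.
- by constructor 2; apply/val_inj.
- by constructor 3; apply/val_inj.
Qed.

Lemma big_topo (R : nmodType) (w : topo -> R) : \sum_g w g = w tAB + w tAC + w tBC.
Proof.
rewrite !big_ord_recl big_ord0 addr0 addrA.
by congr (w _ + w _ + w _); apply/val_inj.
Qed.

Lemma sum_ffun_prod (R : comPzSemiRingType) L (w : topo -> R) :
  \sum_(G : {ffun 'I_L -> topo}) \prod_(i < L) w (G i) = (\sum_g w g) ^+ L.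
Proof.
by rewrite -(bigA_distr_bigA (fun (i : 'I_L) g => w g)) prodr_const card_ord.
Qed.

Section Counts.
Variable L : nat.
Implicit Type G : {ffun 'I_L -> topo}.

Lemma count_topoE G x : count_topo G x = (\sum_(i < L) (G i == x))%N.
Proof.
rewrite /count_topo -sum1_card big_mkcond /=.
by apply: eq_bigr => i _; rewrite inE; case: (G i == x).
Qed.

Lemma count_topo_total G : (count_topo G tAB + count_topo G tAC + count_topo G tBC)%N = L.
Proof.
rewrite !count_topoE -!big_split /= -[RHS]card_ord -sum1_card.
by apply: eq_bigr => i _; case: (topoP (G i)) => ->.
Qed.

(* Degrees chosen so that swapping AB and AC reflects the degree about 1. *)
Definition topo_deg (g : topo) : nat :=
  if g == tAB then 0 else if g == tAC then 2 else 1.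

Definition topo_weight G : nat := \sum_(i < L) topo_deg (G i).

Lemma topo_weightE G : topo_weight G = (count_topo G tBC + 2 * count_topo G tAC)%N.
Proof.
rewrite /topo_weight !count_topoE big_distrr /= -big_split /=.
by apply: eq_bigr => i _; case: (topoP (G i)) => ->.
Qed.

Lemma topo_weight_succ_fails G : topo_weight G = L.+1 ->
  count_topo G tAC = (count_topo G tAB).+1 /\ rstar_fails G.
Proof.
rewrite topo_weightE /rstar_fails => wG; have := count_topo_total G.
by split; lia.
Qed.

Definition swap_AB_AC (g : topo) : topo :=
  if g == tAB then tAC else if g == tAC then tAB else g.

Lemma swap_AB_ACK : involutive swap_AB_AC.
Proof. by move=> g; case: (topoP g) => ->. Qed.

Definition swap_ffun G : {ffun 'I_L -> topo} := [ffun i => swap_AB_AC (G i)].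

Lemma swap_ffun_inj : injective swap_ffun.
Proof.
move=> G H /ffunP eqGH; apply/ffunP => i.
by move: (eqGH i); rewrite !ffunE => /(can_inj swap_AB_ACK).
Qed.

Lemma topo_weight_swap G : (topo_weight G + topo_weight (swap_ffun G))%N = (2 * L)%N.
Proof.
rewrite /topo_weight -big_split /=.
transitivity (\sum_(i < L) 2)%N; last by rewrite sum_nat_const card_ord mulnC.
by apply: eq_bigr => i _; rewrite ffunE; case: (topoP (G i)) => ->.
Qed.

Lemma topo_weight_le G : (topo_weight G <= 2 * L)%N.
Proof. by rewrite -(topo_weight_swap G) leq_addr. Qed.

End Counts.

Definition gen_poly (R : nzSemiRingType) (w : topo -> R) : {poly R} :=
  \sum_g w g *: 'X^(topo_deg g).

Lemma coef_gen_poly (R : nzSemiRingType) (w : topo -> R) g : (gen_poly w)`_(topo_deg g) = w g.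
Proof.
by rewrite /gen_poly big_topo !coefD !coefZ !coefXn; case: (topoP g) => -> /=;
  rewrite !mulr0 ?add0r ?addr0 mulr1.
Qed.

Lemma coef_gen_poly_exp (R : comNzRingType) L (w : topo -> R) m :
  (gen_poly w ^+ L)`_m
  = \sum_(G : {ffun 'I_L -> topo} | topo_weight G == m) \prod_(i < L) w (G i).
Proof.
rewrite -[L in _ ^+ L]card_ord -prodr_const /gen_poly.
rewrite (bigA_distr_bigA (fun (i : 'I_L) g => w g *: 'X^(topo_deg g))) /=.
rewrite coef_sum [RHS]big_mkcond /=; apply: eq_bigr => G _.
rewrite (eq_bigr (fun i => (w (G i))%:P * 'X^(topo_deg (G i)))); last first.
  by move=> i _; rewrite mul_polyC.
rewrite big_split /= prodrXr -rmorph_prod mul_polyC coefZ coefXn eq_sym.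
by case: eqP; rewrite ?mulr1 ?mulr0.
Qed.

Section GenPolyCoef.
Variables (R : comNzRingType) (w : topo -> R).

Lemma coef_gen_poly_exp_sym L m : w tAB = w tAC -> (m <= 2 * L)%N ->
  (gen_poly w ^+ L)`_m = (gen_poly w ^+ L)`_(2 * L - m).
Proof.
move=> wAB_AC le_m; rewrite !coef_gen_poly_exp (reindex_inj (@swap_ffun_inj L)) /=.
apply: eq_big => [G|G _].
  have := topo_weight_swap G.
  move: (topo_weight G) (topo_weight (swap_ffun G)) => a b sum_ab.
  by apply/eqP/eqP => ?; lia.
by apply: eq_bigr => i _; rewrite ffunE; case: (topoP (G i)) => ->.
Qed.

Lemma sum_coef_gen_poly_exp L :
  \sum_(m < (2 * L).+1) (gen_poly w ^+ L)`_m = (\sum_g w g) ^+ L.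
Proof.
rewrite -[RHS]sum_ffun_prod.
under eq_bigr do rewrite coef_gen_poly_exp big_mkcond.
rewrite exchange_big /=; apply: eq_bigr => G _.
rewrite (bigD1 (Ordinal (leq_ltn_trans (topo_weight_le G) (ltnSn _)))) //= eqxx.
rewrite [X in _ + X]big1 ?addr0 // => m neq_m.
by case: eqP => // wG; move: neq_m; rewrite -val_eqE /= wG eqxx.
Qed.

End GenPolyCoef.

Lemma sqr_sum_le (R : realFieldType) N (c : 'I_N -> R) :
  (\sum_i c i) ^+ 2 <= N%:R * \sum_i c i ^+ 2.
Proof.
case: N c => [|N] c; first by rewrite !big_ord0 expr2 mul0r.
set S := \sum_i c i; set Q := \sum_i c i ^+ 2; set a := S / N.+1%:R.
have N0 : N.+1%:R != 0 :> R by rewrite pnatr_eq0.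
(* The variance around the mean [a] is nonnegative. *)
have : 0 <= \sum_i (c i - a) ^+ 2 by apply: sumr_ge0 => i _; exact: sqr_ge0.
rewrite (eq_bigr (fun i => c i ^+ 2 + (- (2 * a) * c i + a ^+ 2))); last first.
  by move=> i _; ring.
rewrite !big_split /= -mulr_sumr sumr_const card_ord -/S -/Q.
have -> : Q + (- (2 * a) * S + a ^+ 2 *+ N.+1) = Q - S ^+ 2 / N.+1%:R.
  by rewrite /a -mulr_natl; field.
by rewrite subr_ge0 ler_pdivrMr ?ltr0Sn // mulrC.
Qed.

Lemma pow_div_succ_le (R : realFieldType) (x : R) k L : 0 <= x -> x <= 1 ->
  (k <= L)%N -> x ^+ L / L.+1%:R <= x ^+ k / k.+1%:R.
Proof.
move=> x0 x1 le_kL; apply: ler_pM; rewrite ?exprn_ge0 ?invr_ge0 ?ler_wiXn2l //.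
by rewrite lef_pV2 ?posrE ?ltr0n // ler_nat.
Qed.

Section GenPolyBounds.
Variables (R : realFieldType) (w : topo -> R).
Hypothesis w_ge0 : forall g, 0 <= w g.
Hypothesis wAB_AC : w tAB = w tAC.
Let S := \sum_g w g.

Lemma coef_gen_poly_exp_ge0 L m : 0 <= (gen_poly w ^+ L)`_m.
Proof.
by rewrite coef_gen_poly_exp; apply: sumr_ge0 => G _; apply: prodr_ge0.
Qed.

Lemma coef_gen_poly_expS_ge L k g :
  w g * (gen_poly w ^+ L)`_k <= (gen_poly w ^+ L.+1)`_(topo_deg g + k).
Proof.
rewrite exprS [X in _ <= X]coefM -coef_gen_poly.
have lt_d : (topo_deg g < (topo_deg g + k).+1)%N by rewrite ltnS leq_addr.
rewrite (bigD1 (Ordinal lt_d)) //= addKn lerDl.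
apply: sumr_ge0 => i _; apply: mulr_ge0; last exact: coef_gen_poly_exp_ge0.
by rewrite -(expr1 (gen_poly w)); exact: coef_gen_poly_exp_ge0.
Qed.

(* By symmetry the middle coefficient of [F^2n = F^n * F^n] is the sum of the
   squares of the coefficients of [F^n], which add up to [S^n]. *)
Lemma central_coef_even_ge n :
  S ^+ (2 * n) / (2 * n).+1%:R <= (gen_poly w ^+ (2 * n))`_(2 * n).
Proof.
have -> : gen_poly w ^+ (2 * n) = gen_poly w ^+ n * gen_poly w ^+ n.
  by rewrite -exprD addnn mul2n.
rewrite [X in _ <= X]coefM.
under eq_bigr => m _ do rewrite -(coef_gen_poly_exp_sym wAB_AC (ltn_ord m)) -expr2.
have := sqr_sum_le (fun m : 'I_(2 * n).+1 => (gen_poly w ^+ n)`_m).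
by rewrite sum_coef_gen_poly_exp -exprM mulnC ler_pdivrMr ?ltr0Sn // mulrC.
Qed.

Hypotheses (S_le1 : S <= 1) (wBC_le1 : w tBC <= 1).

Lemma central_coef_ge L : w tBC * S ^+ L / L.+1%:R <= (gen_poly w ^+ L)`_L.
Proof.
have S0 : 0 <= S by exact: sumr_ge0.
rewrite -mulrA; case: (odd L) (odd_double_half L) => /= <-; rewrite -mul2n.
- rewrite add1n; set n := L./2.
  apply: le_trans (coef_gen_poly_expS_ge (2 * n) (2 * n) tBC).
  rewrite ler_wpM2l //; apply: le_trans (central_coef_even_ge _).
  by rewrite pow_div_succ_le.
- rewrite add0n; apply: le_trans (central_coef_even_ge _).
  by rewrite ler_piMl ?divr_ge0 ?exprn_ge0.
Qed.

Lemma coef_gen_poly_exp_succ_ge L : (0 < L)%N ->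
  w tAC * w tBC * S ^+ L / L.+1%:R <= (gen_poly w ^+ L)`_L.+1.
Proof.
case: L => // L _; apply: le_trans (coef_gen_poly_expS_ge L L tAC).
rewrite -!mulrA ler_wpM2l // !mulrA; apply: le_trans (central_coef_ge L).
rewrite -!mulrA ler_wpM2l // pow_div_succ_le //; exact: sumr_ge0.
Qed.

End GenPolyBounds.

Lemma prod_mulr_exp_count (R : comPzSemiRingType) L (w : topo -> R) (lam : R) x
    (G : {ffun 'I_L -> topo}) :
  \prod_(i < L) w (G i) * lam ^+ count_topo G x
  = \prod_(i < L) (w (G i) * lam ^+ (G i == x)).
Proof. by rewrite count_topoE -prodrXr -big_split. Qed.

(* Exponential tilting (Chernoff bound): weighting each profile by
   [lam ^+ (N_y - N_x) >= 1] turns the distribution [p] into [w]. *)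
Lemma sum_count_le_tilt (R : realFieldType) L (p w : topo -> R) (lam : R) x y :
  1 <= lam -> (forall g, 0 <= p g) -> (forall g, 0 <= w g) ->
  (forall g, p g * lam ^+ (g == y) = w g * lam ^+ (g == x)) ->
  \sum_(G : {ffun 'I_L -> topo} | (count_topo G x <= count_topo G y)%N)
     \prod_(i < L) p (G i) <= (\sum_g w g) ^+ L.
Proof.
move=> lam_ge1 p_ge0 w_ge0 tilt_pw; rewrite -sum_ffun_prod.
have lam_gt0 : 0 < lam by exact: lt_le_trans lam_ge1.
apply: (@le_trans _ _ (\sum_(G | (count_topo G x <= count_topo G y)%N)
                         \prod_(i < L) w (G i))).
  apply: ler_sum => G le_xy.
  have tiltG := prod_mulr_exp_count p lam y G.
  rewrite (eq_bigr _ (fun i _ => tilt_pw (G i))) -prod_mulr_exp_count in tiltG.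
  rewrite -(ler_pM2r (exprn_gt0 (count_topo G x) lam_gt0)) -tiltG.
  by rewrite ler_wpM2l ?prodr_ge0 ?ler_weXn2l.
rewrite [X in _ <= X](bigID (fun G => (count_topo G x <= count_topo G y)%N)) /=.
by rewrite lerDl sumr_ge0 // => G _; rewrite prodr_ge0.
Qed.

Section Rates.
Variable R : realType.

Lemma cvgn_inv : (fun n : nat => n%:R^-1 : R) @ \oo --> 0.
Proof.
apply/cvgrVy; first by near=> n; rewrite invr_gt0 ltr0n; near: n; exact: nbhs_infty_gt.
by rewrite (eq_cvg _ _ (fun n => invrK _)); exact: cvgr_idn.
Unshelve. all: by end_near.
Qed.

(* [ln (n + 1) = 2 ln (sqrt (n + 1)) <= 2 sqrt (n + 1)] and
   [sqrt (n + 1) / n = sqrt (n^-1 + n^-1 * n^-1)]. *)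
Lemma cvgn_ln_succ_div : (fun n : nat => ln (n.+1%:R : R) / n%:R) @ \oo --> 0.
Proof.
pose u (n : nat) : R := n%:R^-1 + n%:R^-1 * n%:R^-1.
apply: (@squeeze_cvgr _ _ _ _ (cst 0) (fun n => 2 * Num.sqrt (u n))).
- near=> n.
  have n_gt0 : 0 < n%:R :> R by rewrite ltr0n; near: n; exact: nbhs_infty_gt.
  have sqrt_gt0 : 0 < Num.sqrt (n.+1%:R : R) by rewrite sqrtr_gt0 ltr0n.
  rewrite divr_ge0 ?ln_ge0 ?ler1n //= ler_pdivrMr // -mulrA.
  have -> : Num.sqrt (u n) * n%:R = Num.sqrt (n.+1%:R).
    rewrite -[X in _ * X]gtr0_norm // -sqrtr_sqr -sqrtrM; last exact: addr_ge0.
    by congr Num.sqrt; rewrite /u -natr1; field; rewrite gt_eqF.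
  rewrite -[X in ln X](sqr_sqrtr (ler0n _ n.+1)) lnXn // -[_ *+ 2]mulr_natl.
  by rewrite ler_pM2l // ltW // ln_sublinear.
- exact: cvg_cst.
- have u_cvg : u @ \oo --> 0.
    have -> : (0 : R) = 0 + 0 * 0 by rewrite mulr0 addr0.
    by apply: cvgD; [|apply: cvgM]; exact: cvgn_inv.
  rewrite -(mulr0 (2 : R)) -sqrtr0; apply: cvgM; first exact: cvg_cst.
  exact: (continuous_cvg _ (@sqrt_continuous R _) u_cvg).
Unshelve. all: by end_near.
Qed.

Lemma cvgn_rate (P : nat -> R) (rho lo hi : R) : 0 < rho -> 0 < lo -> 0 < hi ->
  (forall n, (0 < n)%N -> lo * rho ^+ n / n.+1%:R <= P n <= hi * rho ^+ n) ->
  (fun n => - n%:R^-1 * ln (P n)) @ \oo --> - ln rho.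
Proof.
move=> rho_gt0 lo_gt0 hi_gt0 P_bounds.
apply: (@squeeze_cvgr _ _ _ _ (fun n => - ln rho - ln hi * n%:R^-1)
          (fun n => - ln rho + (ln n.+1%:R / n%:R - ln lo * n%:R^-1))).
- near=> n.
  have n_gt0 : (0 < n)%N by near: n; exact: nbhs_infty_gt.
  have /andP[P_ge P_le] := P_bounds n n_gt0.
  have rho_n_gt0 : 0 < rho ^+ n := exprn_gt0 n rho_gt0.
  have low_gt0 : 0 < lo * rho ^+ n / n.+1%:R by rewrite !mulr_gt0 ?invr_gt0.
  have P_gt0 : 0 < P n := lt_le_trans low_gt0 P_ge.
  have ln_le : ln (P n) <= ln hi + ln rho * n%:R.
    by rewrite mulr_natr -lnXn // -lnM ?posrE // ler_ln ?posrE ?mulr_gt0.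
  have ln_ge : ln lo + ln rho * n%:R - ln n.+1%:R <= ln (P n).
    rewrite mulr_natr -lnXn // -lnM ?posrE // -ln_div ?posrE ?mulr_gt0 ?ltr0n //.
    by rewrite ler_ln ?posrE.
  have n_inv_ge0 : 0 <= n%:R^-1 :> R by rewrite invr_ge0.
  have n_invK : n%:R^-1 * n%:R = 1 :> R by rewrite mulVf // pnatr_eq0 -lt0n.
  have := ler_wpM2l n_inv_ge0 ln_le; have := ler_wpM2l n_inv_ge0 ln_ge.
  rewrite !mulrDr !(mulrCA _ (ln rho)) n_invK mulr1.
  by move=> *; apply/andP; split; lra.
- rewrite -[X in _ --> X]subr0; apply: cvgB; first exact: cvg_cst.
  by rewrite -(mulr0 (ln hi)); apply: cvgM; [exact: cvg_cst|exact: cvgn_inv].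
- rewrite -[X in _ --> X]addr0 -[X in _ + X](subr0 0); apply: cvgD; first exact: cvg_cst.
  apply: cvgB; first exact: cvgn_ln_succ_div.
  by rewrite -(mulr0 (ln lo)); apply: cvgM; [exact: cvg_cst|exact: cvgn_inv].
Unshelve. all: by end_near.
Qed.

End Rates.

Section Expansions.
Variable R : realType.

Lemma ln1B_bounds (x : R) : 0 <= x <= 1 / 2 -> x <= - ln (1 - x) <= x + 2 * x ^+ 2.
Proof.
case/andP=> x_ge0 x_le; have x1_gt0 : 0 < 1 - x by lra.
apply/andP; split; first by rewrite lerNr; apply: le_ln1Dx; lra.
have -> : - ln (1 - x) = ln (1 + x / (1 - x)).
  by rewrite -lnV ?posrE //; congr ln; field; rewrite gt_eqF.
apply: le_trans (le_ln1Dx _) _; first by apply: lt_le_trans (divr_ge0 x_ge0 (ltW x1_gt0)); lra.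
by rewrite ler_pdivrMr // expr2; nra.
Qed.

Lemma expRN_bounds (t : R) : 0 <= t -> t - t ^+ 2 <= 1 - expR (- t) <= t.
Proof.
move=> t_ge0; have e_ge := expR_ge1Dx (- t); have e_gt0 := expR_gt0 (- t).
apply/andP; split; last by lra.
have : expR (- t) * (1 + t) <= 1.
  by rewrite -[leRHS](expRxMexpNx_1 t) mulrC ler_wpM2r ?expR_ge1Dx // ltW.
have : 0 <= t ^+ 3 by exact: exprn_ge0.
rewrite !exprS expr0 mulr1; nra.
Qed.

(* A root [D >= 0] of [D * (4/3 + 2/3 u - D) = u^2] with the other factor
   [>= 2/3] is [3/4 u^2 + O(u^3)]; indeed [D - 3/4 u^2 = D (3/4 D - u/2)]. *)
Lemma small_root_expansion (u D : R) : 0 <= u <= 1 / 4 -> 0 <= D ->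
  2 / 3 <= 4 / 3 + 2 / 3 * u - D -> D * (4 / 3 + 2 / 3 * u - D) = u ^+ 2 ->
  D <= 3 / 2 * u ^+ 2 /\ `|D - 3 / 4 * u ^+ 2| <= 2 * u ^+ 3.
Proof.
case/andP=> u_ge0 u_le D_ge0 K_ge root_D.
have D_le : D <= 3 / 2 * u ^+ 2 by rewrite -root_D; nra.
split=> //.
have -> : D - 3 / 4 * u ^+ 2 = D * (3 / 4 * D - u / 2) by rewrite -root_D; field.
rewrite normrM ger0_norm //.
apply: le_trans (_ : D * (3 / 4 * D + u / 2) <= _).
  by rewrite ler_wpM2l // ler_norml; apply/andP; split; lra.
have D_le' : 3 / 4 * D + u / 2 <= 5 / 4 * u by rewrite expr2 in D_le; nra.
apply: le_trans (ler_pM D_ge0 _ D_le D_le') _; first by nra.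
by rewrite !exprS expr0 mulr1; nra.
Qed.

End Expansions.

Section ThreeTaxon.
Variables (R : realType) (t : R).
Hypothesis t_ge0 : 0 <= t.

Let e := expR (- t).
Let q := e / 3.
Let p := 1 - 2 / 3 * e.
Let s := Num.sqrt (q * p).
Let rho := 2 * s + q.
Let lam := s / q.

Lemma gt_probE g : gt_prob t g = if g == tAB then p else q.
Proof. by rewrite /gt_prob; case: ifP => // _; rewrite /p /e; field. Qed.

Let e_gt0 : 0 < e. Proof. exact: expR_gt0. Qed.
Let e_le1 : e <= 1. Proof. by rewrite /e expR_le1 oppr_le0. Qed.
Let q_gt0 : 0 < q. Proof. by rewrite divr_gt0. Qed.
Let q_le_p : q <= p. Proof. by have := e_le1; rewrite /q /p; lra. Qed.
Let p_add_2q : p + 2 * q = 1. Proof. by rewrite /p /q; field. Qed.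
Let s_sqr : s ^+ 2 = q * p.
Proof. by rewrite sqr_sqrtr // mulr_ge0 //; have := q_le_p; have := q_gt0; lra. Qed.
Let q_le_s : q <= s.
Proof.
rewrite -[q in q <= _]gtr0_norm // -sqrtr_sqr ler_sqrt ?expr2 ?ler_pM2l //.
by rewrite mulr_ge0 ?ltW // (lt_le_trans q_gt0 q_le_p).
Qed.
Let s_gt0 : 0 < s. Proof. exact: lt_le_trans q_le_s. Qed.
Let lam_ge1 : 1 <= lam. Proof. by rewrite ler_pdivlMr // mul1r. Qed.
Let q_lam : q * lam = s. Proof. by rewrite mulrC divfK ?gt_eqF. Qed.
Let s_lam : s * lam = p.
Proof. by rewrite mulrA -expr2 s_sqr mulrAC divff ?gt_eqF ?mul1r. Qed.

Lemma rho_gt0 : 0 < rho. Proof. by rewrite /rho; have := s_gt0; have := q_gt0; lra. Qed.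

(* AM-GM: [2 s <= p + q], and [p + 2 q = 1]. *)
Lemma rho_le1 : rho <= 1.
Proof.
have : 0 <= (p - q) ^+ 2 by exact: sqr_ge0.
have := s_sqr; have := s_gt0; have := q_le_p; have := p_add_2q; rewrite /rho; nra.
Qed.

Definition tilt (y g : topo) : R := if (g == tAB) || (g == y) then s else q.

Lemma tilt_ge0 y g : 0 <= tilt y g.
Proof. by rewrite /tilt; case: ifP => _; apply: ltW. Qed.

Lemma sum_tilt y : y != tAB -> \sum_g tilt y g = rho.
Proof.
by rewrite big_topo /tilt /rho; case: (topoP y) => -> //= _; rewrite addrC; ring.
Qed.

Lemma gt_prob_tilt y g : y != tAB ->
  gt_prob t g * lam ^+ (g == y) = tilt y g * lam ^+ (g == tAB).
Proof.
rewrite gt_probE /tilt; case: (topoP y) => -> // _;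
  by case: (topoP g) => -> /=; rewrite ?expr0 ?expr1 ?mulr1 ?s_lam ?q_lam.
Qed.

Lemma gt_prob_ge0 g : 0 <= gt_prob t g.
Proof. by rewrite gt_probE; case: ifP => _; have := q_le_p; have := q_gt0; lra. Qed.

Lemma fail_prob_le L : fail_prob t L <= 2 * rho ^+ L.
Proof.
pose P y := \sum_(G : {ffun 'I_L -> topo} | (count_topo G tAB <= count_topo G y)%N)
              \prod_(i < L) gt_prob t (G i).
have P_le y : y != tAB -> P y <= rho ^+ L.
  move=> yAB; rewrite /P -(sum_tilt yAB).
  apply: (sum_count_le_tilt _ lam_ge1 gt_prob_ge0 (tilt_ge0 y)) => g.
  exact: gt_prob_tilt.
apply: (@le_trans _ _ (P tAC + P tBC)); last by rewrite mulr2n mulrDl mul1r lerD ?P_le.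
rewrite /fail_prob /P /= big_mkcond [X in _ <= X + _]big_mkcond [X in _ <= _ + X]big_mkcond.
rewrite -big_split /=; apply: ler_sum => G _.
have pG_ge0 : 0 <= \prod_(i < L) gt_prob t (G i) by apply: prodr_ge0 => i _; exact: gt_prob_ge0.
rewrite /rstar_fails; case: ifP => [fails|_]; last by rewrite addr_ge0 //; case: ifP.
have [le_AC|lt_AC] := leqP (count_topo G tAB) (count_topo G tAC).
  by rewrite lerDl; case: ifP.
have le_BC : (count_topo G tAB <= count_topo G tBC)%N by lia.
by rewrite le_BC lerDr.
Qed.

Lemma fail_prob_ge L : (0 < L)%N -> q ^+ 2 * rho ^+ L / L.+1%:R <= fail_prob t L.
Proof.
move=> L_gt0; have lam_gt0 : 0 < lam by exact: lt_le_trans lam_ge1.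
have AC_AB : tAC != tAB by [].
have prob_tilt G : topo_weight G = L.+1 ->
    \prod_(i < L) gt_prob t (G i) = \prod_(i < L) tilt tAC (G i) / lam.
  case/topo_weight_succ_fails => N_AC _.
  have := prod_mulr_exp_count (gt_prob t) lam tAC G.
  rewrite (eq_bigr _ (fun i _ => gt_prob_tilt (G i) AC_AB)) -prod_mulr_exp_count.
  rewrite N_AC exprS mulrA => /(mulIf (expf_neq0 _ (lt0r_neq0 lam_gt0))) <-.
  by rewrite mulfK ?gt_eqF.
apply: (@le_trans _ _ (\sum_(G | topo_weight G == L.+1) \prod_(i < L) gt_prob t (G i))).
  rewrite (eq_bigr _ (fun G wG => prob_tilt G (eqP wG))) -mulr_suml.
  rewrite -coef_gen_poly_exp ler_pdivlMr //.
  have S_le1 : \sum_g tilt tAC g <= 1 by rewrite sum_tilt // rho_le1.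
  have BC_le1 : tilt tAC tBC <= 1 by rewrite /tilt /= /q; have := e_le1; lra.
  rewrite (_ : _ * lam = tilt tAC tAC * tilt tAC tBC * (\sum_g tilt tAC g) ^+ L / L.+1%:R).
    exact: (coef_gen_poly_exp_succ_ge (tilt_ge0 tAC) erefl S_le1 BC_le1 L_gt0).
  by rewrite sum_tilt // /tilt /= -q_lam; ring.
rewrite /fail_prob [X in X <= _]big_mkcond [X in _ <= X]big_mkcond /=.
apply: ler_sum => G _; case: eqP => [/topo_weight_succ_fails [_ ->] //|_].
by case: ifP => // _; apply: prodr_ge0 => i _; exact: gt_prob_ge0.
Qed.

Lemma alpha_rstarE : alpha_rstar t = - ln rho. Proof. by []. Qed.

Lemma alpha_rstar_near0 : t <= 1 / 4 -> `|alpha_rstar t - 3 / 4 * t ^+ 2| <= 5 * t ^+ 3.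
Proof.
move=> t_le; set u := 1 - e; set D := 1 - rho.
have /andP[u_lo u_hi] : t - t ^+ 2 <= u <= t := expRN_bounds t_ge0.
have u_ge0 : 0 <= u by rewrite subr_ge0.
(* [D = p + q - 2 s] and [(p + q)^2 - 4 s^2 = (p - q)^2 = u^2]. *)
have root_D : D * (4 / 3 + 2 / 3 * u - D) = u ^+ 2.
  have := s_sqr; rewrite /D /rho /u /p /q => s2.
  rewrite (_ : 4 / 3 + _ - _ = 1 - e / 3 + 2 * s); last by field.
  rewrite (_ : _ * _ = (1 - e / 3) ^+ 2 - 4 * s ^+ 2); last by ring.
  by rewrite s2; field.
have [D_le D_approx] : D <= 3 / 2 * u ^+ 2 /\ `|D - 3 / 4 * u ^+ 2| <= 2 * u ^+ 3.
  apply: small_root_expansion => //.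
  - by rewrite u_ge0 /=; lra.
  - by rewrite /D subr_ge0 rho_le1.
  - by rewrite /D /rho /u /q; have := s_gt0; have := e_le1; lra.
have u2_le : u ^+ 2 <= t ^+ 2 by rewrite ler_sqr ?nnegrE.
have /andP[alpha_lo alpha_hi] : D <= alpha_rstar t <= D + 2 * D ^+ 2.
  rewrite alpha_rstarE (_ : rho = 1 - D); last by rewrite /D subKr.
  apply: ln1B_bounds; apply/andP; split; first by rewrite /D subr_ge0 rho_le1.
  have : t ^+ 2 <= 1 / 16 by rewrite expr2; nra.
  lra.
have D2_le : D ^+ 2 <= 9 / 4 * t ^+ 4.
  have D_ge0 : 0 <= D by rewrite /D subr_ge0 rho_le1.
  by rewrite (_ : t ^+ 4 = t ^+ 2 * t ^+ 2) -?exprD // expr2; nra.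
have t4_le : t ^+ 4 <= t ^+ 3 / 4 by rewrite exprSr ler_wpM2l ?exprn_ge0 //; lra.
have u3_le : u ^+ 3 <= t ^+ 3 by rewrite ler_pXn2r ?nnegrE.
have t2u2_le : t ^+ 2 - u ^+ 2 <= 2 * t ^+ 3.
  rewrite (_ : t ^+ 2 - u ^+ 2 = (t - u) * (t + u)); last by ring.
  rewrite (_ : 2 * t ^+ 3 = t ^+ 2 * (2 * t)); last by ring.
  by apply: ler_pM; lra.
move: D_approx; rewrite !ler_norml => /andP[? ?]; apply/andP; split; lra.
Qed.

End ThreeTaxon.

Lemma alpha_rstar_sub_half (R : realType) (t : R) :
  alpha_rstar t - t / 2
  = - ln (2 * Num.sqrt ((1 - 2 / 3 * expR (- t)) / 3) + Num.sqrt (expR (- t)) / 3).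
Proof.
rewrite /alpha_rstar; set E := expR (- t); set S := Num.sqrt ((1 - 2 / 3 * E) / 3).
have E_gt0 : 0 < E := expR_gt0 _.
set r := Num.sqrt E; have r_gt0 : 0 < r by rewrite sqrtr_gt0.
have E_r : E = r ^+ 2 by rewrite sqr_sqrtr // ltW.
have t_half : t / 2 = - ln r.
  have : ln E = - t by rewrite expRK.
  by rewrite E_r lnXn // -mulr_natr => ?; lra.
have -> : 2 * Num.sqrt (E / 3 * (1 - 2 / 3 * E)) + E / 3 = r * (2 * S + r / 3).
  have -> : Num.sqrt (E / 3 * (1 - 2 / 3 * E)) = r * S.
    by rewrite /r /S -sqrtrM ?ltW //; congr Num.sqrt; field.
  by rewrite [X in _ + X / 3]E_r; ring.
have X_gt0 : 0 < 2 * S + r / 3 by rewrite ltr_wpDl ?mulr_ge0 ?sqrtr_ge0 ?divr_gt0.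
by rewrite lnM ?posrE // t_half; ring.
Qed.

Lemma cvg_alpha_rstar_sub_half (R : realType) :
  (fun t : R => alpha_rstar t - t / 2) @ +oo --> - (1 / 2) * ln (4 / 3 : R).
Proof.
pose g (E : R) := 2 * Num.sqrt ((1 - 2 / 3 * E) / 3) + Num.sqrt E / 3.
have g0_gt0 : 0 < g 0 by rewrite /g sqrtr0 mul0r addr0 mulr0 subr0 mulr_gt0 ?sqrtr_gt0.
have -> : - (1 / 2) * ln (4 / 3 : R) = - ln (g 0).
  rewrite (_ : 4 / 3 = g 0 ^+ 2); last first.
    by rewrite /g sqrtr0 mul0r addr0 mulr0 subr0 exprMn sqr_sqrtr //; field.
  by rewrite lnXn // -mulr_natr; field.
rewrite (eq_cvg _ _ (@alpha_rstar_sub_half R)).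
have g_cont : {for 0, continuous (fun E => - ln (g E))}.
  apply: cvgN; apply: (continuous_cvg _ (continuous_ln g0_gt0)).
  apply: cvgD; last by apply: cvgM; [exact: sqrt_continuous|exact: cvg_cst].
  apply: cvgM; first exact: cvg_cst.
  apply: (continuous_cvg _ (@sqrt_continuous R _)); apply: cvgM; last exact: cvg_cst.
  by apply: cvgB; [exact: cvg_cst|apply: cvgM; [exact: cvg_cst|exact: cvg_id]].
exact: (continuous_cvg _ g_cont (@cvgr_expR R)).
Qed.

Theorem mainTheorem2 (R : realType) :
  (forall t : R, 0 <= t ->
     (fun L : nat => - (L%:R)^-1 * ln (fail_prob t L)) @ \oo --> alpha_rstar t)
  /\ (exists C delta : R, 0 < delta /\
        forall t : R, 0 <= t -> t < delta ->
          `|alpha_rstar t - 3 / 4 * t ^+ 2| <= C * t ^+ 3)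
  /\ ((fun t : R => alpha_rstar t - t / 2) @ +oo --> - (1 / 2) * ln (4 / 3 : R)).
Proof.
split=> [t t_ge0|]; last split.
- rewrite alpha_rstarE.
  apply: (@cvgn_rate R _ _ ((expR (- t) / 3) ^+ 2) 2 (rho_gt0 t_ge0)) => // [|n n_gt0].
    by rewrite exprn_gt0 // divr_gt0 ?expR_gt0.
  by rewrite fail_prob_ge // fail_prob_le.
- by exists 5, (1 / 4); split=> // t t_ge0 /ltW; exact: alpha_rstar_near0.
- exact: cvg_alpha_rstar_sub_half.
Qed.
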